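(* Let $G$ be a finite group, $\xi$ a linear character of $G$, $\varepsilon$ the trivial or sign character of $S_2$, and $\xi\otimes\varepsilon$ the linear character $(g,g;\sigma)\mapsto\xi(g)\varepsilon(\sigma)$ of $HG_1=\{(g,g;\sigma)\mid g\in G,\sigma\in S_2\}\subset SG_2=G\wr S_2$. For $z\in SG_2$ put $K_z=\sum_{x,y\in HG_1}(\xi\otimes\varepsilon)(xy)\,xzy\in\mathbb{C}SG_2$. Then for $g\in G$ and $\sigma\in S_2$, $K_{(1,g;\sigma)}=0$ if and only if $\xi(g)=-1$ and $C_g=C_{g^{-1}}$.
   Context: $G\wr S_2=\{(g_1,g_2;\sigma)\}$ with multiplication $(g_1,g_2;\sigma)(h_1,h_2;\tau)=(g_1h_{\sigma^{-1}(1)},g_2h_{\sigma^{-1}(2)};\sigma\tau)$. $C_g$ denotes the conjugacy class of $g$ in $G$. *)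

From HB Require Import structures.
From mathcomp Require Import all_boot all_order all_algebra all_fingroup all_solvable all_field all_character.
Set Implicit Arguments. Unset Strict Implicit. Unset Printing Implicit Defensive.
Import GRing.Theory Num.Theory.
Local Open Scope ring_scope.

(* Elements of the wreath product G wr S_2 are triples (g1, g2; sigma),
   with sigma : bool, true meaning the transposition of S_2. *)
Definition wprod (gT : finGroupType) : finType := (gT * gT * bool)%type.

(* (g1,g2;s)(h1,h2;t) = (g1 h_{s^-1(1)}, g2 h_{s^-1(2)}; s t) *)
Definition wmul (gT : finGroupType) (a b : wprod gT) : wprod gT :=
  let: (g1, g2, s) := a in
  let: (h1, h2, t) := b in
  if s then ((g1 * h2)%g, (g2 * h1)%g, addb s t)
       else ((g1 * h1)%g, (g2 * h2)%g, addb s t).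

Definition hchar (gT : finGroupType) (G : {group gT}) (xi : 'CF(G))
  (eps : bool -> algC) (x : wprod gT) : algC := xi x.1.1 * eps x.2.

(* K_z = sum_{x,y in HG_1} (xi (x) eps)(xy) xzy, as an element of the group
   algebra, i.e. as its coefficient function on G wr S_2. *)
Definition Kelt (gT : finGroupType) (G : {group gT}) (xi : 'CF(G))
  (eps : bool -> algC) (z : wprod gT) : {ffun wprod gT -> algC} :=
  [ffun w => \sum_(g in G) \sum_(s : bool) \sum_(h in G) \sum_(t : bool)
     (if wmul (wmul (g, g, s) z) (h, h, t) == w
      then hchar xi eps (wmul (g, g, s) (h, h, t)) else 0)].

From HB Require Import structures.
From mathcomp Require Import all_boot all_order all_algebra all_fingroup all_solvable all_field all_character.
Set Implicit Arguments.
Unset Strict Implicit.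
Unset Printing Implicit Defensive.
Import GRing.Theory Num.Theory.
Local Open Scope ring_scope.

(* Summing over x, y in HG_1 one finds that the coefficient of (w1, w2; c)
   in K_(1, g; s) is eps(c s) (xi(w1) N(w1, w2) + xi(w2) N(w2, w1)), where
   N(w1, w2) counts the x in G with g^x w1 = w2.  At
   (1, g; s) this reads N(1, g) + xi(g) N(g, 1) = 0 with N(1, g) > 0 and
   |xi(g)| = 1, forcing xi(g) = -1 and N(g, 1) > 0, i.e. g^-1 is conjugate
   to g.  Conversely, if g^y = g^-1 then N is symmetric, and whenever
   N(w1, w2) > 0 we have w2 = g^x w1, so xi(w2) = xi(g) xi(w1) = -xi(w1). *)

Lemma natr_add_norm1_mul_eq0 (a : algC) (m n : nat) :
  `|a| = 1 -> (0 < m)%N -> m%:R + a * n%:R = 0 -> a = -1 /\ n = m.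
Proof.
move=> a_norm1 m_gt0 /eqP; rewrite addrC addr_eq0 => /eqP a_n.
have n_m : n = m.
  have := congr1 Num.norm a_n; rewrite normrM a_norm1 mul1r normrN !normr_nat.
  by move/eqP; rewrite eqr_nat => /eqP.
split=> //; apply: (@mulIf _ m%:R); first by rewrite pnatr_eq0 -lt0n.
by rewrite -[in LHS]n_m a_n mulN1r.
Qed.

Section LinearChar.
Variables (gT : finGroupType) (G : {group gT}) (xi : 'CF(G)).
Hypothesis xi_lin : xi \is a linear_char.

Lemma lin_charMl a w : a \in G -> xi (a * w)%g = xi a * xi w.
Proof.
move=> Ga; have [Gw | G'w] := boolP (w \in G); first by rewrite lin_charM.
by rewrite [xi w]cfun0 // mulr0 cfun0 // groupMl.
Qed.

End LinearChar.

Section Coefficients.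
Variables (gT : finGroupType) (G : {group gT}).

Lemma sum_translate_pair (F : gT -> algC) (a c w1 w2 : gT) :
  a \in G -> (w1 \notin G -> F w1 = 0) ->
  \sum_(h in G) (if ((a * h)%g, (c * (a * h))%g) == (w1, w2) then F (a * h)%g else 0)
  = if (c * w1)%g == w2 then F w1 else 0.
Proof.
move=> Ga F0; rewrite (reindex_inj (mulgI a^-1)%g) /=.
under eq_bigl => h do rewrite groupMl ?groupV //.
under eq_bigr => h _ do rewrite mulKVg.
have [Gw1 | G'w1] := boolP (w1 \in G).
  rewrite (bigD1 w1) //= xpair_eqE eqxx big1 ?addr0 // => u /andP[_ u_w1].
  by rewrite xpair_eqE (negbTE u_w1).
rewrite big1 => [|u Gu]; first by case: ifP; rewrite // F0.
by rewrite xpair_eqE; case: eqP => // u_w1; rewrite -u_w1 Gu in G'w1.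
Qed.

Variables (g : gT) (s : bool).

Definition conj_count (w1 w2 : gT) : nat :=
  #|[set x in G | (g ^ x^-1 * w1)%g == w2]|.

Lemma conj_countP w1 w2 :
  reflect (exists2 x, x \in G & (g ^ x * w1)%g = w2) (0 < conj_count w1 w2)%N.
Proof.
rewrite /conj_count card_gt0; apply: (iffP (set0Pn _)) => [[x] | [x Gx gx_w1]].
  by rewrite inE => /andP[Gx /eqP gx_w1]; exists (x^-1)%g; rewrite ?groupV.
by exists (x^-1)%g; rewrite inE groupV Gx invgK gx_w1 /=.
Qed.

Lemma conj_count_sym y w1 w2 :
  y \in G -> (g ^ y)%g = (g^-1)%g -> conj_count w2 w1 = conj_count w1 w2.
Proof.
move=> Gy gy; rewrite /conj_count -(card_rcoset _ y).
suff -> : ([set x in G | g ^ x^-1 * w2 == w1] :* y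
           = [set x in G | g ^ x^-1 * w1 == w2])%g by [].
apply/setP => z; rewrite mem_rcoset !inE groupMr ?groupV //; congr (_ && _).
rewrite invMg invgK conjgM gy conjVg.
by apply/eqP/eqP => <-; rewrite ?mulKg ?mulKVg.
Qed.

Lemma wmul_diagE a0 a h t :
  wmul (wmul (a0, a0, a) (1%g, g, s)) (h, h, t) =
  (if a then ((g ^ a0^-1 * (a0 * h))%g, (a0 * h)%g)
        else ((a0 * h)%g, (g ^ a0^-1 * (a0 * h))%g), addb (addb a s) t).
Proof.
have gh : (g ^ a0^-1 * (a0 * h) = a0 * g * h)%g.
  by rewrite conjgE invgK -!mulgA mulKg.
by rewrite gh; case: a; case: s; case: t; rewrite /= ?mulg1.
Qed.

Lemma hchar_diag_mul (xi : 'CF(G)) (eps : bool -> algC) a0 a h t :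
  hchar xi eps (wmul (a0, a0, a) (h, h, t)) = xi (a0 * h)%g * eps (addb a t).
Proof. by case: a. Qed.

Lemma sum_bool_addb (eps : bool -> algC) (P : gT * gT) a w c (v : algC) :
  \sum_(t : bool) (if (P, addb (addb a s) t) == (w, c) then v * eps (addb a t) else 0)
  = if P == w then v * eps (addb c s) else 0.
Proof.
rewrite big_bool /= !xpair_eqE; case: (P == w); last by rewrite addr0.
by case: a; case: s; case: c; rewrite /= ?addr0 ?add0r.
Qed.

Lemma Kelt_coef (xi : 'CF(G)) (eps : bool -> algC) w1 w2 c :
  Kelt xi eps (1%g, g, s) (w1, w2, c) =
  eps (addb c s) * (xi w1 * (conj_count w1 w2)%:R + xi w2 * (conj_count w2 w1)%:R).
Proof.
have xi_notin v w : w \notin G -> xi w * v = 0 by move=> G'w; rewrite cfun0 ?mul0r.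
have sum_count (P : pred gT) (v : algC) :
    \sum_(x in G) (if P x then v else 0) = v *+ #|[set x in G | P x]|.
  by rewrite -big_mkcondr -sumr_const; apply: eq_bigl => x; rewrite inE.
rewrite ffunE.
under eq_bigr => a0 Ga0.
  under eq_bigr => a _ do under eq_bigr => h _ do
    under eq_bigr => t _ do rewrite wmul_diagE hchar_diag_mul.
  under eq_bigr => a _ do under eq_bigr => h _ do rewrite sum_bool_addb.
  rewrite big_bool /=.
  under [X in X + _]eq_bigr => h _ do rewrite xpair_eqE andbC -xpair_eqE.
  rewrite !(@sum_translate_pair (fun u => xi u * eps (addb c s)) _ _ _ _ Ga0 (xi_notin _ _)).
over.
rewrite big_split /= !sum_count addrC mulrDr /conj_count.
by congr (_ + _); rewrite mulr_natr mulrnAr mulrC.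
Qed.

End Coefficients.

Theorem proposition3p6 (gT : finGroupType) (G : {group gT}) (xi : 'CF(G))
  (eps : bool -> algC) (g : gT) (s : bool) :
  xi \is a linear_char ->
  (eps = (fun _ => 1) \/ eps = (fun b => if b then -1 else 1)) ->
  g \in G ->
  (Kelt xi eps (1%g, g, s) = [ffun => 0] <->
   (xi g = -1 /\ (g ^: G)%g = ((g^-1)%g ^: G)%g)).
Proof.
move=> xi_lin eps_S2 Gg; have eps0 : eps false = 1 by case: eps_S2 => ->.
split=> [K0 | [xi_g class_inv]].
  have := congr1 (fun K : {ffun _ -> _} => K (1%g, g, s)) K0.
  rewrite /= Kelt_coef ffunE addbb eps0 mul1r lin_char1 // mul1r.
  have count_gt0 : (0 < conj_count G g 1 g)%N.
    by apply/conj_countP; exists 1%g; rewrite ?conjg1 ?mulg1.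
  case/(natr_add_norm1_mul_eq0 (normC_lin_char xi_lin Gg) count_gt0) => -> count_eq.
  split=> //; have : (0 < conj_count G g g 1)%N by rewrite count_eq.
  case/conj_countP => x Gx /(canRL (mulgK g)); rewrite mul1g => <-.
  by rewrite classGidl.
have : (g^-1)%g \in (g ^: G)%g by rewrite class_inv class_refl.
case/imsetP => y Gy gy; apply/ffunP => -[[w1 w2] c].
rewrite Kelt_coef ffunE (conj_count_sym _ _ Gy (esym gy)).
have [-> | /conj_countP[x Gx <-]] := posnP (conj_count G g w2 w1).
  by rewrite !mulr0 addr0 mulr0.
by rewrite (lin_charMl xi_lin _ (groupJ Gg Gx)) cfunJ // xi_g mulN1r mulNr addNr mulr0.
Qed.
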